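(* Let $\mathbb{F}$ be a finite field, $M\in\mathbb{F}^{m\times n}$ with $\operatorname{rank}(M)=r-1$. Let $C\in\mathbb{F}^{m\times r}$, $F\in\mathbb{F}^{r\times n}$ with $M=CF$, and let $C_0\in\mathbb{F}^{m\times(r-1)}$, $F_0\in\mathbb{F}^{(r-1)\times n}$ with $M=C_0F_0$. Then there exists $G\in\mathbb{F}^{(r-1)\times r}$ with $C=C_0G$, or there exists $H\in\mathbb{F}^{r\times(r-1)}$ with $F=HF_0$. *)

From mathcomp Require Import all_boot all_algebra.

From mathcomp Require Import all_boot all_algebra.
Local Open Scope ring_scope.

(* If [rank Fm <= k = rank M], then
   [M = C Fm] forces the row space of [Fm] to be that of [M], which lies in
   the row space of [F0], so [Fm] factors through [F0].  Otherwise [Fm] has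
   full row rank [k + 1], so [rank C = rank M], the column space of [C] is
   that of [M], and [C] factors through [M = C0 F0], hence through [C0]. *)

Section FactorThroughProduct.

Variable F : fieldType.

Lemma mulmx_rank_row_submx (m p n : nat) (A : 'M[F]_(m, p)) (B : 'M[F]_(p, n)) :
  (\rank B <= \rank (A *m B))%N -> (B <= A *m B)%MS.
Proof.
move=> le_rank; have [_ <-] := mxrank_leqif_sup (submxMl A B).
by rewrite eqn_leq le_rank mxrankS ?submxMl.
Qed.

Lemma mulmx_rank_col_factor (m p n : nat) (A : 'M[F]_(m, p)) (B : 'M[F]_(p, n)) :
  (\rank A <= \rank (A *m B))%N -> exists G : 'M[F]_(n, p), A = A *m B *m G.
Proof.
move=> le_rank.
have : (A^T <= B^T *m A^T)%MS.
  by apply: mulmx_rank_row_submx; rewrite -trmx_mul !mxrank_tr.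
case/submxP=> D defAt; exists D^T.
by rewrite -[LHS]trmxK defAt !trmx_mul !trmxK.
Qed.

End FactorThroughProduct.

(* r - 1 is written k, so r = k.+1 *)
Theorem lemma9 (F : finFieldType) (m n k : nat) (M : 'M[F]_(m, n))
  (hrank : \rank M = k)
  (C : 'M[F]_(m, k.+1)) (Fm : 'M[F]_(k.+1, n)) (hCF : M = C *m Fm)
  (C0 : 'M[F]_(m, k)) (F0 : 'M[F]_(k, n)) (hCF0 : M = C0 *m F0) :
  (exists G : 'M[F]_(k, k.+1), C = C0 *m G) \/
  (exists H : 'M[F]_(k.+1, k), Fm = H *m F0).
Proof.
have [le_Fm_k | lt_k_Fm] := leqP (\rank Fm) k.
  have sFmM : (Fm <= M)%MS by rewrite hCF mulmx_rank_row_submx // -hCF hrank.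
  have sMF0 : (M <= F0)%MS by rewrite hCF0 submxMl.
  by right; apply/submxP; apply: submx_trans sFmM sMF0.
left.
have free_Fm : row_free Fm by rewrite /row_free eqn_leq rank_leq_row.
have [G defC] : exists G : 'M[F]_(n, k.+1), C = C *m Fm *m G.
  by apply: mulmx_rank_col_factor; rewrite mxrankMfree.
by exists (F0 *m G); rewrite mulmxA -hCF0 hCF.
Qed.
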